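(* The canonical bases $W_+M_N$ and $\hat W_-$ of solutions of (L) on $\Sigma_1$ are related by a constant matrix $Q=Q(B,A)$, $W_+(z)M_N=\hat W_-(z)Q$, and $Q^2=\mathrm{Id}$.
   Context: Let $\omega>0$, $l=B/\omega\ge0$, $\mu=A/(2\omega)>0$. System (L): $u'=z^{-2}\big(-(lz+\mu(1+z^2))u+\frac{z}{2i\omega}v\big)$, $v'=\frac{1}{2i\omega z}u$. $F(z)=\operatorname{diag}(z^{-l}e^{\mu(1/z-z)},1)$. $S_\pm$ are sectors with vertex $0$ containing the closed upper/lower half-plane minus $0$, closures avoiding $i\mathbb R_\mp$, $S_-=\overline{S_+}$ (so $z\mapsto1/z$ swaps $S_+$ and $S_-$). $H_\pm$ are the unique invertible matrix functions holomorphic on $S_\pm$, $C^\infty$ on $\overline{S_\pm}\setminus\{\infty\}$, $H_\pm(0)=\mathrm{Id}$, transforming (L) via $w=H_\pm\tilde w$ into $\tilde u'=-z^{-2}(lz+\mu(1+z^2))\tilde u$, $\tilde v'=0$. $W_+=H_+F$ on $S_+$. $\Sigma_1$ is the component of $S_+\cap S_-$ containing $\mathbb R_+$. $M_N=\operatorname{diag}(e^{-2\pi il},1)$. The transformation $\mathbb I:(u,v)(z)\mapsto -iz^{-l}e^{\mu(1/z-z)}\big(-v(z^{-1}),u(z^{-1})\big)$ maps solutions of (L) to solutions of (L) and is an involution of the solution space; $\hat W_-=\mathbb I(W_+M_N)$ is obtained by applying $\mathbb I$ to each column. *)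

From Stdlib Require Import Reals Lra.
Open Scope R_scope.

Definition Cx : Type := (R * R)%type.
Definition RtoC (x : R) : Cx := (x, 0).
Definition C0 : Cx := (0, 0).
Definition C1 : Cx := (1, 0).
Definition Ci : Cx := (0, 1).
Definition Cadd (a b : Cx) : Cx := (fst a + fst b, snd a + snd b).
Definition Copp (a : Cx) : Cx := (- fst a, - snd a).
Definition Csub (a b : Cx) : Cx := Cadd a (Copp b).
Definition Cmul (a b : Cx) : Cx :=
  (fst a * fst b - snd a * snd b, fst a * snd b + snd a * fst b).
Definition Cinv (a : Cx) : Cx :=
  let d := fst a * fst a + snd a * snd a in (fst a / d, - snd a / d).
Definition Cdiv (a b : Cx) : Cx := Cmul a (Cinv b).
Definition Cconj (a : Cx) : Cx := (fst a, - snd a).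
Definition Cmod (a : Cx) : R := sqrt (fst a * fst a + snd a * snd a).
Definition Cexp (a : Cx) : Cx := (exp (fst a) * cos (snd a), exp (fst a) * sin (snd a)).

(* Argument with values in (-pi/2, 3pi/2]: the branch of arg on C minus the
   closed negative imaginary half-axis, which contains the closure of S_+
   (minus 0).  Its restriction to the right half-plane is the principal arg. *)
Definition Carg (a : Cx) : R :=
  let x := fst a in let y := snd a in
  match Rlt_dec 0 x with
  | left _ => atan (y / x)
  | right _ =>
      match Rlt_dec x 0 with
      | left _ => atan (y / x) + PI
      | right _ => if Rlt_dec 0 y then PI / 2 else - (PI / 2)
      end
  end.
Definition Clog (a : Cx) : Cx := (ln (Cmod a), Carg a).
Definition Cpow (a : Cx) (s : R) : Cx := Cexp (Cmul (RtoC s) (Clog a)).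

Record M2 : Type := mkM2 { e11 : Cx; e12 : Cx; e21 : Cx; e22 : Cx }.
Definition V2 : Type := (Cx * Cx)%type.
Definition mId : M2 := mkM2 C1 C0 C0 C1.
Definition mmul (A B : M2) : M2 :=
  mkM2 (Cadd (Cmul (e11 A) (e11 B)) (Cmul (e12 A) (e21 B)))
       (Cadd (Cmul (e11 A) (e12 B)) (Cmul (e12 A) (e22 B)))
       (Cadd (Cmul (e21 A) (e11 B)) (Cmul (e22 A) (e21 B)))
       (Cadd (Cmul (e21 A) (e12 B)) (Cmul (e22 A) (e22 B))).
Definition msub (A B : M2) : M2 :=
  mkM2 (Csub (e11 A) (e11 B)) (Csub (e12 A) (e12 B))
       (Csub (e21 A) (e21 B)) (Csub (e22 A) (e22 B)).
Definition mscal (c : Cx) (A : M2) : M2 :=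
  mkM2 (Cmul c (e11 A)) (Cmul c (e12 A)) (Cmul c (e21 A)) (Cmul c (e22 A)).
Definition mdiag (a b : Cx) : M2 := mkM2 a C0 C0 b.
Definition mdet (A : M2) : Cx := Csub (Cmul (e11 A) (e22 A)) (Cmul (e12 A) (e21 A)).
Definition mnorm (A : M2) : R :=
  Cmod (e11 A) + Cmod (e12 A) + Cmod (e21 A) + Cmod (e22 A).
Definition col1 (A : M2) : V2 := (e11 A, e21 A).
Definition col2 (A : M2) : V2 := (e12 A, e22 A).
Definition of_cols (c1 c2 : V2) : M2 := mkM2 (fst c1) (fst c2) (snd c1) (snd c2).

Definition mderiv_on (f f' : Cx -> M2) (U : Cx -> Prop) : Prop :=
  forall z, U z -> forall eps, 0 < eps -> exists delta, 0 < delta /\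
    forall h, h <> C0 -> Cmod h < delta ->
      mnorm (msub (mscal (Cinv h) (msub (f (Cadd z h)) (f z))) (f' z)) < eps.

Definition mcont_on (f : Cx -> M2) (K : Cx -> Prop) : Prop :=
  forall z, K z -> forall eps, 0 < eps -> exists delta, 0 < delta /\
    forall w, K w -> Cmod (Csub w z) < delta -> mnorm (msub (f w) (f z)) < eps.

Definition mholo_on (f : Cx -> M2) (U : Cx -> Prop) : Prop :=
  exists f', mderiv_on f f' U.

(* f, holomorphic on the open set U, is C^infinity on the closed set K
   (the closure of U): all its complex derivatives on U extend
   continuously to K, and f itself is continuous on K. *)
Definition smooth_upto (f : Cx -> M2) (U K : Cx -> Prop) : Prop :=
  exists D : nat -> Cx -> M2,
    (forall z, D 0%nat z = f z) /\
    (forall n, mderiv_on (D n) (D (S n)) U) /\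
    (forall n, mcont_on (D n) K).

Definition S_plus (alpha beta : R) (z : Cx) : Prop :=
  z <> C0 /\ - alpha < Carg z < PI + beta.
(* its closure in C (= closure in the Riemann sphere minus infinity) *)
Definition S_plus_cl (alpha beta : R) (z : Cx) : Prop :=
  z = C0 \/ (z <> C0 /\ - alpha <= Carg z <= PI + beta).
Definition S_minus (alpha beta : R) (z : Cx) : Prop := S_plus alpha beta (Cconj z).

Definition path_cont (gamma : R -> Cx) : Prop :=
  forall t, 0 <= t <= 1 -> forall eps, 0 < eps -> exists delta, 0 < delta /\
    forall s, 0 <= s <= 1 -> Rabs (s - t) < delta -> Cmod (Csub (gamma s) (gamma t)) < eps.

(* Sigma_1 : the (path-)connected component of S_+ /\ S_- containing R_+
   (equivalently containing 1, since R_+ is connected and lies in S_+ /\ S_-). *)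
Definition Sigma1 (alpha beta : R) (z : Cx) : Prop :=
  exists gamma : R -> Cx, path_cont gamma /\ gamma 0 = C1 /\ gamma 1 = z /\
    forall t, 0 <= t <= 1 -> S_plus alpha beta (gamma t) /\ S_minus alpha beta (gamma t).

(* coefficient matrix of (L):  w' = L_mat z w,  w = (u,v) *)
Definition lam (l mu : R) (z : Cx) : Cx :=
  Copp (Cmul (Cinv (Cmul z z))
             (Cadd (Cmul (RtoC l) z) (Cmul (RtoC mu) (Cadd C1 (Cmul z z))))).
Definition L_mat (omega l mu : R) (z : Cx) : M2 :=
  mkM2 (lam l mu z)
       (Cmul (Cinv (Cmul z z)) (Cdiv z (Cmul (RtoC 2) (Cmul Ci (RtoC omega)))))
       (Cinv (Cmul (Cmul (RtoC 2) (Cmul Ci (RtoC omega))) z))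
       C0.
Definition Lambda_mat (l mu : R) (z : Cx) : M2 := mdiag (lam l mu z) C0.

(* H transforms (L) via w = H w~ into the reduced system:  H' = L H - H Lambda *)
Definition transforms_L (omega l mu : R) (H : Cx -> M2) (U : Cx -> Prop) : Prop :=
  exists H', mderiv_on H H' U /\
    forall z, U z -> H' z = msub (mmul (L_mat omega l mu z) (H z)) (mmul (H z) (Lambda_mat l mu z)).

Definition fexp (l mu : R) (z : Cx) : Cx :=
  Cmul (Cpow z (- l)) (Cexp (Cmul (RtoC mu) (Csub (Cinv z) z))).
Definition F_mat (l mu : R) (z : Cx) : M2 := mdiag (fexp l mu z) C1.
Definition M_N (l : R) : M2 := mdiag (Cexp (0, - (2 * PI * l))) C1.

Definition I_trans (l mu : R) (w : Cx -> V2) : Cx -> V2 :=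
  fun z => let c := Cmul (Copp Ci) (fexp l mu z) in
           (Cmul c (Copp (snd (w (Cinv z)))), Cmul c (fst (w (Cinv z)))).
Definition I_mat (l mu : R) (W : Cx -> M2) : Cx -> M2 :=
  fun z => of_cols (I_trans l mu (fun x => col1 (W x)) z)
                   (I_trans l mu (fun x => col2 (W x)) z).

(* Let W := W_+ M_N and Y := I(W_+ M_N).  Both are fundamental matrices of (L) on the cone
   |Im z| < tan(alpha) Re z: this cone lies in S_+, is stable under z -> 1/z, and contains
   Sigma_1, since a path in S_+ /\ S_- starting at 1 cannot cross the imaginary axis.
   Differentiating along the segment from 1 to z (chain rule for H_+, explicit derivative of
   z^-l e^(mu (1/z - z))) gives W' = L W and Y' = L Y, so Y^-1 W is constant; call it Q.
   At z = 1 the transformation I reduces to Y(1) = K W(1) with K = -i [[0,-1],[1,0]] and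
   K^2 = 1, hence W(1) = K W(1) Q = W(1) Q^2 and Q^2 = 1. *)

From Stdlib Require Import Reals Lra Field Ranalysis5.
Open Scope R_scope.

(** * Complex numbers *)

Lemma Cx_eq (a b : Cx) : fst a = fst b -> snd a = snd b -> a = b.
Proof. destruct a, b; simpl; intros; subst; reflexivity. Qed.

Lemma Cx_dec (a b : Cx) : {a = b} + {a <> b}.
Proof.
  destruct a as [x y], b as [u v].
  destruct (Req_EM_T x u), (Req_EM_T y v); subst;
    [left; reflexivity | right; intro E; injection E; auto ..].
Qed.

Lemma Cx_ring : ring_theory C0 C1 Cadd Cmul Csub Copp (@eq Cx).
Proof.
  constructor; intros; repeat match goal with a : Cx |- _ => destruct a end;
    apply Cx_eq; simpl; ring.
Qed.

Lemma C1_neq_C0 : C1 <> C0.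
Proof. intro E; injection E; lra. Qed.

Lemma Cinv_l (a : Cx) : a <> C0 -> Cmul (Cinv a) a = C1.
Proof.
  destruct a as [x y]; intro Ha.
  assert (x * x + y * y <> 0).
  { intro E; apply Ha; apply Cx_eq; simpl; nra. }
  apply Cx_eq; simpl; field; assumption.
Qed.

Lemma Cx_field : field_theory C0 C1 Cadd Cmul Csub Copp Cdiv Cinv (@eq Cx).
Proof. constructor; [exact Cx_ring | exact C1_neq_C0 | reflexivity | exact Cinv_l]. Qed.

Add Field Cx_field_inst : Cx_field.

Lemma Cmul_neq0 (a b : Cx) : a <> C0 -> b <> C0 -> Cmul a b <> C0.
Proof.
  intros Ha Hb E; apply Hb.
  transitivity (Cmul (Cinv a) (Cmul a b)); [field; exact Ha | rewrite E; ring].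
Qed.

Lemma Ci_neq0 : Ci <> C0.
Proof. intro E; injection E; lra. Qed.

Lemma RtoC_neq0 (x : R) : x <> 0 -> RtoC x <> C0.
Proof. intros Hx E; injection E; auto. Qed.

Lemma RtoC_opp (x : R) : RtoC (- x) = Copp (RtoC x).
Proof. apply Cx_eq; simpl; ring. Qed.

Lemma Cx_neq0_of_fst_pos (w : Cx) : 0 < fst w -> w <> C0.
Proof. intros H E; subst; simpl in H; lra. Qed.

Lemma Cinv_C1 : Cinv C1 = C1.
Proof. apply Cx_eq; simpl; field. Qed.

Lemma Cexp_add (a b : Cx) : Cexp (Cadd a b) = Cmul (Cexp a) (Cexp b).
Proof.
  destruct a as [x y], b as [u v]; unfold Cexp; simpl.
  rewrite exp_plus, cos_plus, sin_plus; apply Cx_eq; simpl; ring.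
Qed.

Lemma Cexp_neq0 (a : Cx) : Cexp a <> C0.
Proof.
  unfold Cexp; intro E; injection E; intros Es Ec.
  pose proof (exp_pos (fst a)); pose proof (sin2_cos2 (snd a)); unfold Rsqr in *.
  apply Rmult_integral in Ec, Es.
  destruct Ec, Es; nra.
Qed.

Lemma fexp_neq0 (l mu : R) (w : Cx) : fexp l mu w <> C0.
Proof. apply Cmul_neq0; apply Cexp_neq0. Qed.

Lemma Carg_of_fst_pos (w : Cx) : 0 < fst w -> Carg w = atan (snd w / fst w).
Proof. intro H; unfold Carg; destruct (Rlt_dec 0 (fst w)); [reflexivity | lra]. Qed.

Lemma Cexp_C0 : Cexp C0 = C1.
Proof. unfold Cexp; simpl; rewrite exp_0, cos_0, sin_0; apply Cx_eq; simpl; ring. Qed.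

Lemma fexp_C1 (l mu : R) : fexp l mu C1 = C1.
Proof.
  assert (Hlog : Clog C1 = C0).
  { unfold Clog, Cmod; rewrite Carg_of_fst_pos by (simpl; lra); apply Cx_eq; simpl.
    - replace (1 * 1 + 0 * 0) with 1 by ring; rewrite sqrt_1; apply ln_1.
    - replace (0 / 1) with 0 by field; apply atan_0. }
  unfold fexp, Cpow; rewrite Hlog, Cinv_C1.
  replace (Cmul (RtoC (- l)) C0) with C0 by ring.
  replace (Cmul (RtoC mu) (Csub C1 C1)) with C0 by ring.
  rewrite Cexp_C0; ring.
Qed.

(* Equivalent to [Cmod], with elementary triangle and product inequalities. *)
Definition Cnorm1 (a : Cx) : R := Rabs (fst a) + Rabs (snd a).

Lemma Cnorm1_ge0 (a : Cx) : 0 <= Cnorm1 a.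
Proof. unfold Cnorm1; pose proof (Rabs_pos (fst a)); pose proof (Rabs_pos (snd a)); lra. Qed.

Lemma Rabs_fst_le_Cmod (a : Cx) : Rabs (fst a) <= Cmod a.
Proof.
  unfold Cmod; rewrite <- sqrt_Rsqr_abs; apply sqrt_le_1_alt.
  unfold Rsqr; pose proof (Rle_0_sqr (snd a)); unfold Rsqr in *; lra.
Qed.

Lemma Rabs_snd_le_Cmod (a : Cx) : Rabs (snd a) <= Cmod a.
Proof.
  unfold Cmod; rewrite <- sqrt_Rsqr_abs; apply sqrt_le_1_alt.
  unfold Rsqr; pose proof (Rle_0_sqr (fst a)); unfold Rsqr in *; lra.
Qed.

Lemma Cnorm1_le_Cmod (a : Cx) : Cnorm1 a <= 2 * Cmod a.
Proof. unfold Cnorm1; pose proof (Rabs_fst_le_Cmod a); pose proof (Rabs_snd_le_Cmod a); lra. Qed.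

Lemma Cmod_le_Cnorm1 (a : Cx) : Cmod a <= Cnorm1 a.
Proof.
  unfold Cmod; rewrite <- (sqrt_Rsqr _ (Cnorm1_ge0 a)); apply sqrt_le_1_alt.
  pose proof (Rsqr_abs (fst a)); pose proof (Rsqr_abs (snd a)).
  pose proof (Rabs_pos (fst a)); pose proof (Rabs_pos (snd a)).
  unfold Rsqr, Cnorm1 in *; nra.
Qed.

Lemma Cnorm1_add (a b : Cx) : Cnorm1 (Cadd a b) <= Cnorm1 a + Cnorm1 b.
Proof.
  unfold Cnorm1; simpl.
  pose proof (Rabs_triang (fst a) (fst b)); pose proof (Rabs_triang (snd a) (snd b)); lra.
Qed.

Lemma Cnorm1_mul (a b : Cx) : Cnorm1 (Cmul a b) <= Cnorm1 a * Cnorm1 b.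
Proof.
  unfold Cnorm1; simpl; unfold Rminus.
  pose proof (Rabs_triang (fst a * fst b) (- (snd a * snd b))).
  pose proof (Rabs_triang (fst a * snd b) (snd a * fst b)).
  rewrite Rabs_Ropp, !Rabs_mult in *.
  pose proof (Rabs_pos (fst a)); pose proof (Rabs_pos (snd a)).
  pose proof (Rabs_pos (fst b)); pose proof (Rabs_pos (snd b)); nra.
Qed.

Lemma Cnorm1_RtoC (s : R) : Cnorm1 (RtoC s) = Rabs s.
Proof. unfold Cnorm1; simpl; rewrite Rabs_R0; ring. Qed.

(** * Derivatives along a real parameter *)

Definition Cderivable_pt_lim (f : R -> Cx) (t : R) (c : Cx) : Prop :=
  derivable_pt_lim (fun s => fst (f s)) t (fst c) /\
  derivable_pt_lim (fun s => snd (f s)) t (snd c).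

Lemma derivable_pt_lim_val (f : R -> R) (t a b : R) :
  derivable_pt_lim f t a -> a = b -> derivable_pt_lim f t b.
Proof. intros H <-; exact H. Qed.

Lemma Cderivable_pt_lim_val (f : R -> Cx) (t : R) (a b : Cx) :
  Cderivable_pt_lim f t a -> a = b -> Cderivable_pt_lim f t b.
Proof. intros H <-; exact H. Qed.

Lemma Cderivable_pt_lim_ext (f g : R -> Cx) (t : R) (c : Cx) :
  (forall s, f s = g s) -> Cderivable_pt_lim f t c -> Cderivable_pt_lim g t c.
Proof.
  intros E [H1 H2]; split; eapply derivable_pt_lim_ext; eauto;
    intro s; simpl; rewrite E; reflexivity.
Qed.

Lemma Cderivable_pt_lim_locally_ext (f g : R -> Cx) (t r : R) (c : Cx) : 0 < r ->
  (forall s, Rabs (s - t) < r -> f s = g s) ->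
  Cderivable_pt_lim f t c -> Cderivable_pt_lim g t c.
Proof.
  intros Hr E [H1 H2].
  assert (Ht : t - r < t < t + r) by lra.
  assert (E' : forall s, t - r < s < t + r -> f s = g s)
    by (intros s Hs; apply E, Rabs_def1; lra).
  split; eapply derivable_pt_lim_locally_ext; eauto; intros s Hs; simpl; rewrite E'; auto.
Qed.

Lemma Cderivable_pt_lim_const (c : Cx) (t : R) : Cderivable_pt_lim (fun _ => c) t C0.
Proof. split; apply derivable_pt_lim_const. Qed.

Lemma Cderivable_pt_lim_plus (f g : R -> Cx) (t : R) (a b : Cx) :
  Cderivable_pt_lim f t a -> Cderivable_pt_lim g t b ->
  Cderivable_pt_lim (fun s => Cadd (f s) (g s)) t (Cadd a b).
Proof. intros [] []; split; apply derivable_pt_lim_plus; assumption. Qed.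

Lemma Cderivable_pt_lim_opp (f : R -> Cx) (t : R) (a : Cx) :
  Cderivable_pt_lim f t a -> Cderivable_pt_lim (fun s => Copp (f s)) t (Copp a).
Proof. intros []; split; apply derivable_pt_lim_opp; assumption. Qed.

Lemma Cderivable_pt_lim_minus (f g : R -> Cx) (t : R) (a b : Cx) :
  Cderivable_pt_lim f t a -> Cderivable_pt_lim g t b ->
  Cderivable_pt_lim (fun s => Csub (f s) (g s)) t (Csub a b).
Proof. intros; apply Cderivable_pt_lim_plus, Cderivable_pt_lim_opp; assumption. Qed.

Lemma Cderivable_pt_lim_mult (f g : R -> Cx) (t : R) (a b : Cx) :
  Cderivable_pt_lim f t a -> Cderivable_pt_lim g t b ->
  Cderivable_pt_lim (fun s => Cmul (f s) (g s)) t (Cadd (Cmul a (g t)) (Cmul (f t) b)).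
Proof.
  intros [] []; split; simpl; (eapply derivable_pt_lim_val;
    [first [apply derivable_pt_lim_minus | apply derivable_pt_lim_plus];
     apply derivable_pt_lim_mult; eassumption | cbv beta; ring]).
Qed.

Lemma Cderivable_pt_lim_RtoC (t : R) : Cderivable_pt_lim RtoC t C1.
Proof. split; [apply derivable_pt_lim_id | apply derivable_pt_lim_const]. Qed.

Lemma Cderivable_pt_lim_segment (a b : Cx) (t : R) :
  Cderivable_pt_lim (fun s => Cadd a (Cmul (RtoC s) b)) t b.
Proof.
  eapply Cderivable_pt_lim_val.
  - apply Cderivable_pt_lim_plus; [apply Cderivable_pt_lim_const |].
    apply Cderivable_pt_lim_mult; [apply Cderivable_pt_lim_RtoC | apply Cderivable_pt_lim_const].
  - cbv beta; ring.
Qed.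

Lemma Cderivable_pt_lim_inv (f : R -> Cx) (t : R) (a : Cx) : f t <> C0 ->
  Cderivable_pt_lim f t a ->
  Cderivable_pt_lim (fun s => Cinv (f s)) t (Copp (Cmul a (Cinv (Cmul (f t) (f t))))).
Proof.
  intros Hn [H1 H2].
  assert (Hsq : derivable_pt_lim (fun s => fst (f s) * fst (f s) + snd (f s) * snd (f s)) t
     (fst a * fst (f t) + fst (f t) * fst a + (snd a * snd (f t) + snd (f t) * snd a)))
    by (apply derivable_pt_lim_plus; apply derivable_pt_lim_mult; assumption).
  assert (Hd : fst (f t) * fst (f t) + snd (f t) * snd (f t) <> 0).
  { intro E; apply Hn; apply Cx_eq; simpl; nra. }
  unfold Cinv; split; simpl.
  - eapply derivable_pt_lim_val; [apply (derivable_pt_lim_div _ _ _ _ _ H1 Hsq Hd) |].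
    cbv beta; destruct (f t) as [x y]; simpl in *; unfold Rsqr; field; nra.
  - eapply derivable_pt_lim_val;
      [apply (derivable_pt_lim_div _ _ _ _ _ (derivable_pt_lim_opp _ _ _ H2) Hsq Hd) |].
    unfold opp_fct; cbv beta; destruct (f t) as [x y]; simpl in *; unfold Rsqr; field; nra.
Qed.

Lemma Cderivable_pt_lim_exp (f : R -> Cx) (t : R) (a : Cx) : Cderivable_pt_lim f t a ->
  Cderivable_pt_lim (fun s => Cexp (f s)) t (Cmul (Cexp (f t)) a).
Proof.
  intros [H1 H2].
  pose proof (derivable_pt_lim_comp _ _ _ _ _ H1 (derivable_pt_lim_exp _)).
  pose proof (derivable_pt_lim_comp _ _ _ _ _ H2 (derivable_pt_lim_cos _)).
  pose proof (derivable_pt_lim_comp _ _ _ _ _ H2 (derivable_pt_lim_sin _)).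
  unfold Cexp; split; simpl; (eapply derivable_pt_lim_val;
    [apply derivable_pt_lim_mult; eassumption | unfold comp; cbv beta; ring]).
Qed.

(* [Clog] on the right half-plane, where [Carg w = atan (snd w / fst w)]. *)
Lemma Cderivable_pt_lim_log_right (f : R -> Cx) (t : R) (a : Cx) :
  Cderivable_pt_lim f t a -> 0 < fst (f t) ->
  Cderivable_pt_lim (fun s => (ln (Cmod (f s)), atan (snd (f s) / fst (f s)))) t
    (Cmul a (Cinv (f t))).
Proof.
  intros [H1 H2] Hx; unfold Cmod.
  set (S := fst (f t) * fst (f t) + snd (f t) * snd (f t)).
  assert (HS : 0 < S) by (unfold S; nra).
  assert (Hsqrt : 0 < sqrt S) by (apply sqrt_lt_R0; exact HS).
  assert (Hsq : derivable_pt_lim (fun s => fst (f s) * fst (f s) + snd (f s) * snd (f s)) t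
     (fst a * fst (f t) + fst (f t) * fst a + (snd a * snd (f t) + snd (f t) * snd a)))
    by (apply derivable_pt_lim_plus; apply derivable_pt_lim_mult; assumption).
  pose proof (derivable_pt_lim_comp _ _ _ _ _ Hsq (derivable_pt_lim_sqrt _ HS)) as Hmod.
  pose proof (derivable_pt_lim_comp _ _ _ _ _ Hmod (derivable_pt_lim_ln _ Hsqrt)) as Hln.
  split; simpl.
  - eapply derivable_pt_lim_val; [exact Hln |].
    unfold S in *; field_simplify_eq; [rewrite pow2_sqrt; [ring | lra] | lra].
  - eapply derivable_pt_lim_val.
    + apply (derivable_pt_lim_comp _ atan), derivable_pt_lim_atan.
      apply derivable_pt_lim_div; [exact H2 | exact H1 | apply Rgt_not_eq, Hx].
    + cbv beta; unfold Rsqr; field; split; [fold S |]; lra.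
Qed.

Lemma RtoC_inv (s : R) : s <> 0 -> RtoC (/ s) = Cinv (RtoC s).
Proof. intro Hs; apply Cx_eq; simpl; field; exact Hs. Qed.

Definition Cdiff_quot (f : R -> Cx) (t s : R) : Cx :=
  Cmul (RtoC (/ s)) (Csub (f (t + s)) (f t)).

Lemma Cderivable_pt_lim_quot (f : R -> Cx) (t : R) (c : Cx) :
  Cderivable_pt_lim f t c <->
  forall eta, 0 < eta -> exists d, 0 < d /\
    forall s, s <> 0 -> Rabs s < d -> Cnorm1 (Csub (Cdiff_quot f t s) c) < eta.
Proof.
  assert (Hq : forall s, s <> 0 -> Csub (Cdiff_quot f t s) c =
    ((fst (f (t + s)) - fst (f t)) / s - fst c, (snd (f (t + s)) - snd (f t)) / s - snd c))
    by (intros s Hs; apply Cx_eq; simpl; field; exact Hs).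
  split.
  - intros [H1 H2] eta He.
    destruct (H1 (eta / 2)) as [d1 Hd1]; [lra |]; destruct (H2 (eta / 2)) as [d2 Hd2]; [lra |].
    exists (Rmin d1 d2); split; [apply Rmin_pos; apply cond_pos |].
    intros s Hs Hsd; rewrite (Hq s Hs); unfold Cnorm1; simpl.
    specialize (Hd1 s Hs (Rlt_le_trans _ _ _ Hsd (Rmin_l _ _))).
    specialize (Hd2 s Hs (Rlt_le_trans _ _ _ Hsd (Rmin_r _ _))); lra.
  - intros H; split; intros eps He; destruct (H eps He) as [d [Hd Hs]];
      exists (mkposreal d Hd); intros s Hs0 Hsd; specialize (Hs s Hs0 Hsd);
      rewrite (Hq s Hs0) in Hs; unfold Cnorm1 in Hs; simpl in Hs;
      pose proof (Rabs_pos ((fst (f (t + s)) - fst (f t)) / s - fst c));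
      pose proof (Rabs_pos ((snd (f (t + s)) - snd (f t)) / s - snd c)); lra.
Qed.

Definition is_Cderiv (h : Cx -> Cx) (z d : Cx) : Prop :=
  forall eps, 0 < eps -> exists delta, 0 < delta /\ forall k, k <> C0 -> Cmod k < delta ->
    Cmod (Csub (Cmul (Cinv k) (Csub (h (Cadd z k)) (h z))) d) < eps.

Lemma is_Cderiv_remainder (h : Cx -> Cx) (z d : Cx) : is_Cderiv h z d ->
  forall eps, 0 < eps -> exists delta, 0 < delta /\ forall k, Cmod k < delta ->
    Cnorm1 (Csub (Csub (h (Cadd z k)) (h z)) (Cmul d k)) <= eps * Cnorm1 k.
Proof.
  intros Hh eps He; destruct (Hh (eps / 2)) as [delta [Hd Hk]]; [lra |].
  exists delta; split; [exact Hd |]; intros k Hkd.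
  destruct (Cx_dec k C0) as [-> | Hk0].
  - replace (Csub (Csub (h (Cadd z C0)) (h z)) (Cmul d C0)) with C0
      by (replace (Cadd z C0) with z by ring; ring).
    unfold Cnorm1; simpl; rewrite Rabs_R0; pose proof (Cnorm1_ge0 C0); nra.
  - set (e := Csub (Cmul (Cinv k) (Csub (h (Cadd z k)) (h z))) d).
    replace (Csub (Csub (h (Cadd z k)) (h z)) (Cmul d k)) with (Cmul k e)
      by (unfold e; field; exact Hk0).
    specialize (Hk k Hk0 Hkd); fold e in Hk.
    pose proof (Cnorm1_mul k e); pose proof (Cnorm1_le_Cmod e); pose proof (Cnorm1_ge0 k).
    nra.
Qed.

Lemma Cdiff_quot_comp (h : Cx -> Cx) (d c : Cx) (p : R -> Cx) (t s : R) : s <> 0 ->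
  Csub (Cdiff_quot (fun u => h (p u)) t s) (Cmul d c) =
  Cadd (Cmul d (Csub (Cdiff_quot p t s) c))
       (Cmul (RtoC (/ s))
          (Csub (Csub (h (p (t + s))) (h (p t))) (Cmul d (Csub (p (t + s)) (p t))))).
Proof. intro Hs; unfold Cdiff_quot; rewrite RtoC_inv by exact Hs; field; apply RtoC_neq0, Hs. Qed.

Lemma Cnorm1_div_le (s e M : R) (k r : Cx) : s <> 0 -> 0 <= e ->
  Cnorm1 r <= e * Cnorm1 k -> Cnorm1 k <= Rabs s * M -> Cnorm1 (Cmul (RtoC (/ s)) r) <= e * M.
Proof.
  intros Hs He Hr Hk; eapply Rle_trans; [apply Cnorm1_mul |].
  rewrite Cnorm1_RtoC, Rabs_inv; apply Rmult_le_reg_l with (Rabs s); [apply Rabs_pos_lt, Hs |].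
  rewrite <- Rmult_assoc, Rinv_r, Rmult_1_l by (apply Rabs_no_R0, Hs).
  pose proof (Rmult_le_compat_l e _ _ He Hk); pose proof (Rabs_pos s); nra.
Qed.

Lemma Cderivable_pt_lim_comp (h : Cx -> Cx) (z d : Cx) (p : R -> Cx) (t : R) (c : Cx) :
  is_Cderiv h z d -> p t = z -> Cderivable_pt_lim p t c ->
  Cderivable_pt_lim (fun s => h (p s)) t (Cmul d c).
Proof.
  intros Hh Hpt Hp; apply Cderivable_pt_lim_quot; intros eps He.
  set (M := Cnorm1 c + 1); pose proof (Cnorm1_ge0 c); pose proof (Cnorm1_ge0 d).
  assert (HM : 0 < M) by (unfold M; lra).
  destruct (is_Cderiv_remainder _ _ _ Hh (eps / (2 * M))) as [d1 [Hd1 Hr]];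
    [apply Rdiv_lt_0_compat; lra |].
  set (eta := Rmin 1 (eps / (2 * (Cnorm1 d + 1)))).
  assert (Heta : 0 < eta) by (apply Rmin_pos; [lra | apply Rdiv_lt_0_compat; lra]).
  assert (Heta1 : eta <= 1) by apply Rmin_l.
  assert (Heta2 : eta <= eps / (2 * (Cnorm1 d + 1))) by apply Rmin_r.
  destruct (proj1 (Cderivable_pt_lim_quot p t c) Hp eta Heta) as [d2 [Hd2 Hq]].
  exists (Rmin d2 (d1 / M)); split; [apply Rmin_pos; [| apply Rdiv_lt_0_compat]; lra |].
  intros s Hs Hsd; specialize (Hq s Hs (Rlt_le_trans _ _ _ Hsd (Rmin_l _ _))).
  pose proof (Rmin_r d2 (d1 / M)) as Hsd1.
  rewrite Cdiff_quot_comp by exact Hs; rewrite Hpt.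
  set (q := Cdiff_quot p t s) in *; set (k := Csub (p (t + s)) z).
  assert (Hk : Cnorm1 k <= Rabs s * M).
  { replace k with (Cmul (RtoC s) q)
      by (unfold q, k, Cdiff_quot; rewrite Hpt, RtoC_inv by exact Hs; field; apply RtoC_neq0, Hs).
    pose proof (Cnorm1_add (Csub q c) c); replace (Cadd (Csub q c) c) with q in * by ring.
    pose proof (Cnorm1_mul (RtoC s) q); rewrite Cnorm1_RtoC in *.
    pose proof (Rabs_pos s); unfold M in *; nra. }
  assert (Hkd : Cmod k < d1).
  { pose proof (Cmod_le_Cnorm1 k).
    assert (Rabs s * M < d1 / M * M) by (apply Rmult_lt_compat_r; lra).
    replace (d1 / M * M) with d1 in * by (field; lra); lra. }
  replace (p (t + s)) with (Cadd z k) by (unfold k; ring).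
  (* each of the two terms contributes at most [eps / 2] *)
  pose proof (Cnorm1_div_le s (eps / (2 * M)) M k _ Hs
    ltac:(apply Rlt_le, Rdiv_lt_0_compat; lra) (Hr k Hkd) Hk) as Hsecond.
  replace (eps / (2 * M) * M) with (eps / 2) in Hsecond by (field; lra).
  pose proof (Cnorm1_add (Cmul d (Csub q c))
    (Cmul (RtoC (/ s)) (Csub (Csub (h (Cadd z k)) (h z)) (Cmul d k)))).
  pose proof (Cnorm1_mul d (Csub q c)); pose proof (Cnorm1_ge0 (Csub q c)).
  assert (Hfirst : Cnorm1 d * Cnorm1 (Csub q c) < eps / 2).
  { apply Rle_lt_trans with ((Cnorm1 d + 1) * (eps / (2 * (Cnorm1 d + 1))) - eta); [nra |].
    replace ((Cnorm1 d + 1) * (eps / (2 * (Cnorm1 d + 1)))) with (eps / 2) by (field; lra); lra. }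
  lra.
Qed.

Lemma derivable_pt_lim_pos_near (f : R -> R) (t a : R) :
  derivable_pt_lim f t a -> 0 < f t ->
  exists r, 0 < r /\ forall s, Rabs (s - t) < r -> 0 < f s.
Proof.
  intros Hd Hpos.
  assert (Hc : continuity_pt f t) by (apply derivable_continuous_pt; exists a; exact Hd).
  destruct (Hc (f t) Hpos) as [r [Hr Hnear]]; exists r; split; [exact Hr |]; intros s Hs.
  destruct (Req_dec s t) as [-> | Hst]; [exact Hpos |].
  assert (Hdist : R_dist (f s) (f t) < f t) by (apply Hnear; repeat split; auto).
  unfold R_dist in Hdist; apply Rabs_def2 in Hdist; lra.
Qed.

(* [fexp] is the exponential of [-l log z + mu (1/z - z)], whose derivative is [lam]. *)
Lemma Cderivable_pt_lim_fexp (l mu : R) (g : R -> Cx) (t : R) (a : Cx) :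
  Cderivable_pt_lim g t a -> 0 < fst (g t) ->
  Cderivable_pt_lim (fun s => fexp l mu (g s)) t (Cmul (Cmul (lam l mu (g t)) (fexp l mu (g t))) a).
Proof.
  intros Hg Hx.
  destruct (derivable_pt_lim_pos_near _ _ _ (proj1 Hg) Hx) as [r [Hr Hnear]].
  set (logg := fun s => (ln (Cmod (g s)), atan (snd (g s) / fst (g s)))).
  set (E := fun s => Cadd (Cmul (RtoC (- l)) (logg s)) (Cmul (RtoC mu) (Csub (Cinv (g s)) (g s)))).
  assert (HE : forall s, Rabs (s - t) < r -> Cexp (E s) = fexp l mu (g s)).
  { intros s Hs; unfold E, logg, fexp, Cpow, Clog.
    rewrite Cexp_add, Carg_of_fst_pos by (apply Hnear, Hs); reflexivity. }
  apply (Cderivable_pt_lim_locally_ext _ _ _ _ _ Hr HE).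
  assert (Hgt : g t <> C0) by (apply Cx_neq0_of_fst_pos, Hx).
  eapply Cderivable_pt_lim_val.
  - apply Cderivable_pt_lim_exp; unfold E; apply Cderivable_pt_lim_plus;
      apply Cderivable_pt_lim_mult; try apply Cderivable_pt_lim_const.
    + apply Cderivable_pt_lim_log_right; [exact Hg | exact Hx].
    + apply Cderivable_pt_lim_minus; [apply Cderivable_pt_lim_inv; [exact Hgt |] | ]; exact Hg.
  - rewrite HE by (rewrite Rminus_diag_eq, Rabs_R0 by reflexivity; exact Hr).
    unfold lam; rewrite RtoC_opp; field; exact Hgt.
Qed.

(** * 2x2 matrices *)

Definition madd (A B : M2) : M2 :=
  mkM2 (Cadd (e11 A) (e11 B)) (Cadd (e12 A) (e12 B)) (Cadd (e21 A) (e21 B)) (Cadd (e22 A) (e22 B)).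
Definition mzero : M2 := mkM2 C0 C0 C0 C0.
Definition adj (A : M2) : M2 := mkM2 (e22 A) (Copp (e12 A)) (Copp (e21 A)) (e11 A).
Definition minv (A : M2) : M2 := mscal (Cinv (mdet A)) (adj A).

Lemma M2_eq (A B : M2) :
  e11 A = e11 B -> e12 A = e12 B -> e21 A = e21 B -> e22 A = e22 B -> A = B.
Proof. destruct A, B; simpl; intros; subst; reflexivity. Qed.

Ltac M2_ext := apply M2_eq;
  cbn [e11 e12 e21 e22 mmul madd mscal msub mdiag mzero mId adj minv L_mat Lambda_mat].

Lemma mmul_assoc (A B C : M2) : mmul (mmul A B) C = mmul A (mmul B C).
Proof. M2_ext; ring. Qed.

Lemma mmul_1_l (A : M2) : mmul mId A = A.
Proof. M2_ext; ring. Qed.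

Lemma mdet_mmul (A B : M2) : mdet (mmul A B) = Cmul (mdet A) (mdet B).
Proof. unfold mdet; cbn [mmul e11 e12 e21 e22]; ring. Qed.

Lemma mdet_mscal (c : Cx) (A : M2) : mdet (mscal c A) = Cmul (Cmul c c) (mdet A).
Proof. unfold mdet; cbn [mscal e11 e12 e21 e22]; ring. Qed.

Lemma mdet_mdiag (a b : Cx) : mdet (mdiag a b) = Cmul a b.
Proof. unfold mdet; cbn [mdiag e11 e12 e21 e22]; ring. Qed.

Lemma mmul_minv_l (A : M2) : mdet A <> C0 -> mmul (minv A) A = mId.
Proof. intro H; M2_ext; unfold mdet in *; field; exact H. Qed.

Lemma mmul_minv_r (A B : M2) : mdet A <> C0 -> mmul A (mmul (minv A) B) = B.
Proof. intro H; M2_ext; unfold mdet in *; field; exact H. Qed.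

Definition M2derivable_pt_lim (F : R -> M2) (t : R) (A : M2) : Prop :=
  Cderivable_pt_lim (fun s => e11 (F s)) t (e11 A) /\
  Cderivable_pt_lim (fun s => e12 (F s)) t (e12 A) /\
  Cderivable_pt_lim (fun s => e21 (F s)) t (e21 A) /\
  Cderivable_pt_lim (fun s => e22 (F s)) t (e22 A).

Ltac split4 := split; [| split; [| split]].

Lemma M2derivable_pt_lim_val (F : R -> M2) (t : R) (A B : M2) :
  M2derivable_pt_lim F t A -> A = B -> M2derivable_pt_lim F t B.
Proof. intros H <-; exact H. Qed.

Lemma M2derivable_pt_lim_ext (F G : R -> M2) (t : R) (A : M2) :
  (forall s, F s = G s) -> M2derivable_pt_lim F t A -> M2derivable_pt_lim G t A.
Proof.
  intros E (H11 & H12 & H21 & H22);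
    split4; eapply Cderivable_pt_lim_ext; try eassumption; intro s; simpl; rewrite E; reflexivity.
Qed.

Lemma M2derivable_pt_lim_const (A : M2) (t : R) : M2derivable_pt_lim (fun _ => A) t mzero.
Proof. repeat split; apply derivable_pt_lim_const. Qed.

Lemma M2derivable_pt_lim_mult (F G : R -> M2) (t : R) (A B : M2) :
  M2derivable_pt_lim F t A -> M2derivable_pt_lim G t B ->
  M2derivable_pt_lim (fun s => mmul (F s) (G s)) t (madd (mmul A (G t)) (mmul (F t) B)).
Proof.
  intros (A11 & A12 & A21 & A22) (B11 & B12 & B21 & B22).
  split4; cbn [e11 e12 e21 e22 mmul madd];
    (eapply Cderivable_pt_lim_val;
     [apply Cderivable_pt_lim_plus; apply Cderivable_pt_lim_mult; eassumption | cbv beta; ring]).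
Qed.

Lemma M2derivable_pt_lim_scal (c : R -> Cx) (F : R -> M2) (t : R) (a : Cx) (A : M2) :
  Cderivable_pt_lim c t a -> M2derivable_pt_lim F t A ->
  M2derivable_pt_lim (fun s => mscal (c s) (F s)) t (madd (mscal a (F t)) (mscal (c t) A)).
Proof.
  intros Hc (A11 & A12 & A21 & A22).
  split4; cbn [e11 e12 e21 e22 mscal madd];
    (eapply Cderivable_pt_lim_val; [apply Cderivable_pt_lim_mult; eassumption | reflexivity]).
Qed.

Lemma M2derivable_pt_lim_adj (F : R -> M2) (t : R) (A : M2) :
  M2derivable_pt_lim F t A -> M2derivable_pt_lim (fun s => adj (F s)) t (adj A).
Proof.
  intros (A11 & A12 & A21 & A22); split4; cbn [e11 e12 e21 e22 adj];
    try apply Cderivable_pt_lim_opp; assumption.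
Qed.

Lemma Cderivable_pt_lim_mdet (F : R -> M2) (t : R) (A : M2) : M2derivable_pt_lim F t A ->
  Cderivable_pt_lim (fun s => mdet (F s)) t
    (Csub (Cadd (Cmul (e11 A) (e22 (F t))) (Cmul (e11 (F t)) (e22 A)))
          (Cadd (Cmul (e12 A) (e21 (F t))) (Cmul (e12 (F t)) (e21 A)))).
Proof.
  intros (A11 & A12 & A21 & A22); unfold mdet.
  apply Cderivable_pt_lim_minus; apply Cderivable_pt_lim_mult; assumption.
Qed.

Lemma M2derivable_pt_lim_minv_mult (X Z : R -> M2) (t : R) (c : Cx) (A : M2) :
  M2derivable_pt_lim X t (mscal c (mmul A (X t))) ->
  M2derivable_pt_lim Z t (mscal c (mmul A (Z t))) ->
  mdet (X t) <> C0 ->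
  M2derivable_pt_lim (fun s => mmul (minv (X s)) (Z s)) t mzero.
Proof.
  intros HX HZ Hdet; unfold minv.
  eapply M2derivable_pt_lim_val.
  - apply M2derivable_pt_lim_mult; [| exact HZ].
    apply M2derivable_pt_lim_scal; [| apply M2derivable_pt_lim_adj, HX].
    apply Cderivable_pt_lim_inv; [exact Hdet | apply Cderivable_pt_lim_mdet, HX].
  - unfold mdet in *; M2_ext; field; exact Hdet.
Qed.

Lemma is_Cderiv_entries (H H' : Cx -> M2) (U : Cx -> Prop) (z : Cx) :
  mderiv_on H H' U -> U z ->
  is_Cderiv (fun w => e11 (H w)) z (e11 (H' z)) /\ is_Cderiv (fun w => e12 (H w)) z (e12 (H' z)) /\
  is_Cderiv (fun w => e21 (H w)) z (e21 (H' z)) /\ is_Cderiv (fun w => e22 (H w)) z (e22 (H' z)).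
Proof.
  intros Hd Hz; split4; intros eps Heps; destruct (Hd z Hz eps Heps) as [delta [Hdelta Hk]];
    exists delta; split; auto; intros k Hk0 Hkd; specialize (Hk k Hk0 Hkd);
    unfold mnorm in Hk; cbn [e11 e12 e21 e22 msub mscal] in Hk;
    match type of Hk with Cmod ?a + Cmod ?b + Cmod ?c + Cmod ?d < _ =>
      pose proof (sqrt_pos (fst a * fst a + snd a * snd a));
      pose proof (sqrt_pos (fst b * fst b + snd b * snd b));
      pose proof (sqrt_pos (fst c * fst c + snd c * snd c));
      pose proof (sqrt_pos (fst d * fst d + snd d * snd d)) end;
    unfold Cmod in *; lra.
Qed.

Lemma M2derivable_pt_lim_comp (H H' : Cx -> M2) (U : Cx -> Prop) (p : R -> Cx) (t : R) (c : Cx) :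
  mderiv_on H H' U -> U (p t) -> Cderivable_pt_lim p t c ->
  M2derivable_pt_lim (fun s => H (p s)) t (mscal c (H' (p t))).
Proof.
  intros Hd HU Hp; destruct (is_Cderiv_entries _ _ _ _ Hd HU) as (D11 & D12 & D21 & D22).
  split4; cbn [e11 e12 e21 e22 mscal]; (eapply Cderivable_pt_lim_val;
    [eapply (Cderivable_pt_lim_comp (fun w => _ (H w))); [eassumption | reflexivity | exact Hp]
    | ring]).
Qed.

Lemma derivable_pt_lim_zero_const_01 (phi : R -> R) :
  (forall t, 0 <= t <= 1 -> derivable_pt_lim phi t 0) -> phi 1 = phi 0.
Proof.
  intros H.
  assert (pr : forall x, 0 < x < 1 -> derivable_pt phi x)
    by (intros x Hx; exists 0; apply H; lra).
  apply (null_derivative_loc phi 0 1 pr); [| | lra].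
  - intros x Hx; apply derivable_continuous_pt; exists 0; apply H, Hx.
  - intros x Hx; apply derive_pt_eq_0, H; lra.
Qed.

Lemma M2derivable_pt_lim_zero_const_01 (G : R -> M2) :
  (forall t, 0 <= t <= 1 -> M2derivable_pt_lim G t mzero) -> G 1 = G 0.
Proof.
  intros H; apply M2_eq; apply Cx_eq; apply (derivable_pt_lim_zero_const_01 (fun s => _ (_ (G s))));
    intros t Ht; destruct (H t Ht) as ([] & [] & [] & []); assumption.
Qed.

(** * A cone around the positive real axis *)

Definition cone (a : R) (w : Cx) : Prop := 0 < fst w /\ Rabs (snd w) < tan a * fst w.

Lemma atan_lt_iff (a u : R) : 0 < a < PI / 2 -> atan u < a <-> u < tan a.
Proof.
  intros Ha; assert (E : atan (tan a) = a) by (apply atan_tan; lra); split; intro H.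
  - destruct (Rlt_or_le u (tan a)) as [| [Hlt | <-]]; [assumption | | lra].
    apply atan_increasing in Hlt; lra.
  - apply atan_increasing in H; lra.
Qed.

Lemma cone_Carg (a : R) (w : Cx) : 0 < a < PI / 2 -> cone a w -> - a < Carg w < a.
Proof.
  intros Ha [Hx Hy]; rewrite Carg_of_fst_pos by exact Hx.
  assert (Hb : Rabs (snd w / fst w) < tan a).
  { unfold Rdiv; rewrite Rabs_mult, Rabs_inv, (Rabs_pos_eq (fst w)) by lra.
    apply Rmult_lt_reg_r with (fst w); [exact Hx |].
    rewrite Rmult_assoc, Rinv_l by lra; lra. }
  apply Rabs_def2 in Hb; split.
  - assert (atan (- (snd w / fst w)) < a) by (apply atan_lt_iff; lra).
    rewrite atan_opp in *; lra.
  - apply atan_lt_iff; lra.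
Qed.

Lemma cone_S_plus (a b : R) (w : Cx) : 0 < a < PI / 2 -> 0 < b -> cone a w -> S_plus a b w.
Proof.
  intros Ha Hb Hw; pose proof (cone_Carg a w Ha Hw); pose proof PI_RGT_0.
  split; [apply Cx_neq0_of_fst_pos, Hw | lra].
Qed.

Lemma cone_Cinv (a : R) (w : Cx) : cone a w -> cone a (Cinv w).
Proof.
  intros [Hx Hy]; unfold cone, Cinv; simpl.
  set (d := fst w * fst w + snd w * snd w); assert (Hd : 0 < d) by (unfold d; nra).
  split; [apply Rdiv_lt_0_compat; assumption |].
  unfold Rdiv; rewrite Rabs_mult, Rabs_Ropp, Rabs_inv, (Rabs_pos_eq d) by lra.
  assert (0 < / d) by (apply Rinv_0_lt_compat, Hd); nra.
Qed.

Lemma cone_segment (a : R) (z : Cx) (t : R) : 0 < a < PI / 2 -> cone a z -> 0 <= t <= 1 ->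
  cone a (Cadd C1 (Cmul (RtoC t) (Csub z C1))).
Proof.
  intros Ha [Hx Hy] Ht; pose proof (tan_gt_0 a (proj1 Ha) (proj2 Ha)).
  unfold cone; simpl.
  replace (0 + (t * (snd z + - 0) + 0 * (fst z + - (1)))) with (t * snd z) by ring.
  rewrite Rabs_mult, (Rabs_pos_eq t) by lra.
  split; [nra |].
  assert (0 <= tan a * (1 - t)) by (apply Rmult_le_pos; lra).
  destruct (Req_dec t 0) as [-> | Ht0]; [nra |].
  assert (t * Rabs (snd z) < t * (tan a * fst z)) by (apply Rmult_lt_compat_l; lra).
  nra.
Qed.

Lemma S_plus_S_minus_fst_neq0 (a b : R) (z : Cx) : 0 < a < PI / 2 ->
  S_plus a b z -> S_minus a b z -> fst z <> 0.
Proof.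
  intros Ha [Hz [H1 H2]] [_ [H3 H4]] Hx; destruct z as [x y]; simpl in Hx; subst x.
  unfold Carg, Cconj in *; simpl in *.
  destruct (Rlt_dec 0 0); [lra |]; destruct (Rlt_dec 0 0); [lra |].
  destruct (Rlt_dec 0 y), (Rlt_dec 0 (- y)); lra.
Qed.

Lemma Rabs_clamp01 (x a : R) : 0 <= a <= 1 -> Rabs (Rmax 0 (Rmin x 1) - a) <= Rabs (x - a).
Proof.
  intro Ha; unfold Rmax, Rmin.
  destruct (Rle_dec x 1), (Rle_dec 0 _); unfold Rabs; repeat destruct Rcase_abs; lra.
Qed.

(* IVT for the real part, clamped to [0, 1] to make it continuous on R. *)
Lemma path_fst_pos (g : R -> Cx) : path_cont g -> g 0 = C1 ->
  (forall t, 0 <= t <= 1 -> fst (g t) <> 0) -> 0 < fst (g 1).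
Proof.
  intros Hc H0 Hnz; destruct (Rlt_or_le 0 (fst (g 1))) as [| Hle]; [assumption | exfalso].
  set (phi := fun x => - fst (g (Rmax 0 (Rmin x 1)))).
  assert (Hclamp : forall x, 0 <= x <= 1 -> Rmax 0 (Rmin x 1) = x).
  { intros x Hx; rewrite Rmin_left, Rmax_right; lra. }
  assert (Hphi : forall x, 0 <= x <= 1 -> continuity_pt phi x).
  { intros x Hx eps Heps; destruct (Hc x Hx eps Heps) as [delta [Hdelta Hd]].
    exists delta; split; [exact Hdelta |]; intros y [_ Hy]; simpl in *; unfold R_dist in *.
    unfold phi; rewrite (Hclamp x Hx).
    assert (Hy01 : 0 <= Rmax 0 (Rmin y 1) <= 1)
      by (split; [apply Rmax_l | apply Rmax_lub; [lra | apply Rmin_r]]).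
    pose proof (Rabs_clamp01 y x Hx).
    specialize (Hd _ Hy01 ltac:(lra)).
    pose proof (Rabs_fst_le_Cmod (Csub (g (Rmax 0 (Rmin y 1))) (g x))) as Hf; simpl in Hf.
    replace (- fst (g (Rmax 0 (Rmin y 1))) - - fst (g x))
      with (- (fst (g (Rmax 0 (Rmin y 1))) + - fst (g x))) by ring.
    rewrite Rabs_Ropp; lra. }
  destruct (IVT_interv phi 0 1 Hphi) as [c [Hc01 Hc0]]; [lra | | |].
  - unfold phi; rewrite Hclamp, H0 by lra; simpl; lra.
  - unfold phi; rewrite Hclamp by lra; specialize (Hnz 1 ltac:(lra)); lra.
  - apply (Hnz c Hc01); unfold phi in Hc0; rewrite Hclamp in Hc0 by exact Hc01; lra.
Qed.

Lemma Sigma1_sub_cone (a b : R) (z : Cx) : 0 < a < PI / 2 -> Sigma1 a b z -> cone a z.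
Proof.
  intros Ha [g [Hc [H0 [H1 HS]]]]; subst z.
  assert (Hx : 0 < fst (g 1)).
  { apply path_fst_pos; [exact Hc | exact H0 |]; intros t Ht.
    destruct (HS t Ht); eapply S_plus_S_minus_fst_neq0; eassumption. }
  destruct (HS 1 ltac:(lra)) as [[_ [Hp _]] [_ [Hm _]]].
  rewrite Carg_of_fst_pos in Hp by exact Hx.
  unfold Cconj in Hm; rewrite Carg_of_fst_pos in Hm by exact Hx; simpl in Hm.
  replace (- snd (g 1) / fst (g 1)) with (- (snd (g 1) / fst (g 1))) in Hm by (field; lra).
  rewrite atan_opp in Hm.
  assert (A1 : snd (g 1) / fst (g 1) < tan a) by (apply atan_lt_iff; lra).
  assert (A2 : - (snd (g 1) / fst (g 1)) < tan a) by (apply atan_lt_iff; [| rewrite atan_opp]; lra).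
  split; [exact Hx |].
  replace (snd (g 1)) with (snd (g 1) / fst (g 1) * fst (g 1)) by (field; lra).
  rewrite Rabs_mult, (Rabs_pos_eq (fst (g 1))) by lra.
  apply Rmult_lt_compat_r; [exact Hx | apply Rabs_def1; lra].
Qed.

(** * The two fundamental matrices *)

Definition W_MN (Hp : Cx -> M2) (l mu : R) (z : Cx) : M2 :=
  mmul (mmul (Hp z) (F_mat l mu z)) (M_N l).

Definition Jm : M2 := mkM2 C0 (Copp C1) C1 C0.

Lemma I_mat_eq (l mu : R) (W : Cx -> M2) (z : Cx) :
  I_mat l mu W z = mscal (Cmul (Copp Ci) (fexp l mu z)) (mmul Jm (W (Cinv z))).
Proof. unfold I_mat, I_trans, of_cols, col1, col2, Jm; M2_ext; simpl; ring. Qed.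

Lemma mdet_W_MN (Hp : Cx -> M2) (l mu : R) (z : Cx) :
  mdet (Hp z) <> C0 -> mdet (W_MN Hp l mu z) <> C0.
Proof.
  intro H; unfold W_MN, F_mat, M_N; rewrite !mdet_mmul, !mdet_mdiag.
  auto using Cmul_neq0, fexp_neq0, Cexp_neq0, C1_neq_C0.
Qed.

Lemma mdet_I_W_MN (Hp : Cx -> M2) (l mu : R) (z : Cx) :
  mdet (Hp (Cinv z)) <> C0 -> mdet (I_mat l mu (W_MN Hp l mu) z) <> C0.
Proof.
  intro H; rewrite I_mat_eq, mdet_mscal, mdet_mmul.
  assert (HJ : mdet Jm = C1) by (unfold mdet, Jm; simpl; ring).
  assert (Hc : Cmul (Copp Ci) (fexp l mu z) <> C0).
  { apply Cmul_neq0; [| apply fexp_neq0].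
    intro E; apply Ci_neq0; transitivity (Copp (Copp Ci)); [ring | rewrite E; ring]. }
  rewrite HJ; auto using Cmul_neq0, C1_neq_C0, mdet_W_MN.
Qed.

Lemma mmul_sqr_id_of_conj (K W Q : M2) : mdet W <> C0 -> mmul K K = mId ->
  W = mmul (mmul K W) Q -> mmul Q Q = mId.
Proof.
  intros HW HK HWQ.
  assert (HKW : mmul K W = mmul W Q)
    by (rewrite HWQ at 1; rewrite <- !mmul_assoc, HK, mmul_1_l; reflexivity).
  assert (HW2 : W = mmul W (mmul Q Q)) by (rewrite HWQ at 1; rewrite HKW, mmul_assoc; reflexivity).
  rewrite <- (mmul_1_l (mmul Q Q)), <- (mmul_minv_l W HW), mmul_assoc, <- HW2.
  reflexivity.
Qed.

Lemma M2derivable_pt_lim_F_mat (l mu : R) (g : R -> Cx) (t : R) (a : Cx) :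
  Cderivable_pt_lim g t a -> 0 < fst (g t) ->
  M2derivable_pt_lim (fun s => F_mat l mu (g s)) t
    (mdiag (Cmul (Cmul (lam l mu (g t)) (fexp l mu (g t))) a) C0).
Proof.
  intros Hg Hx; split4; cbn [e11 e12 e21 e22 F_mat mdiag]; try apply Cderivable_pt_lim_const.
  apply Cderivable_pt_lim_fexp; assumption.
Qed.

Section Solutions.

Variables (omega l mu : R) (Hp H' : Cx -> M2) (U : Cx -> Prop).
Hypothesis Hderiv : mderiv_on Hp H' U.
Hypothesis Htransforms : forall z, U z ->
  H' z = msub (mmul (L_mat omega l mu z) (Hp z)) (mmul (Hp z) (Lambda_mat l mu z)).
Hypothesis Homega : omega <> 0.

Lemma M2derivable_pt_lim_W_MN (g : R -> Cx) (t : R) (a : Cx) :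
  U (g t) -> Cderivable_pt_lim g t a -> 0 < fst (g t) ->
  M2derivable_pt_lim (fun s => W_MN Hp l mu (g s)) t
    (mscal a (mmul (L_mat omega l mu (g t)) (W_MN Hp l mu (g t)))).
Proof.
  intros HU Hg Hx; unfold W_MN; eapply M2derivable_pt_lim_val.
  - apply M2derivable_pt_lim_mult; [| apply M2derivable_pt_lim_const].
    apply M2derivable_pt_lim_mult; [eapply M2derivable_pt_lim_comp; eassumption |].
    apply M2derivable_pt_lim_F_mat; eassumption.
  - rewrite (Htransforms _ HU); unfold F_mat, M_N; M2_ext; ring.
Qed.

Lemma M2derivable_pt_lim_I_W_MN (p : R -> Cx) (t : R) (a : Cx) :
  U (Cinv (p t)) -> Cderivable_pt_lim p t a -> 0 < fst (p t) -> 0 < fst (Cinv (p t)) ->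
  M2derivable_pt_lim (fun s => I_mat l mu (W_MN Hp l mu) (p s)) t
    (mscal a (mmul (L_mat omega l mu (p t)) (I_mat l mu (W_MN Hp l mu) (p t)))).
Proof.
  intros HU Hp' Hx Hix.
  assert (Hpt : p t <> C0) by (apply Cx_neq0_of_fst_pos, Hx).
  eapply M2derivable_pt_lim_ext; [intro s; symmetry; apply I_mat_eq |].
  eapply M2derivable_pt_lim_val.
  - apply M2derivable_pt_lim_scal.
    + apply Cderivable_pt_lim_mult; [apply Cderivable_pt_lim_const |].
      apply Cderivable_pt_lim_fexp; eassumption.
    + apply M2derivable_pt_lim_mult; [apply M2derivable_pt_lim_const |].
      apply (M2derivable_pt_lim_W_MN (fun s => Cinv (p s))); [exact HU | | exact Hix].
      apply Cderivable_pt_lim_inv; eassumption.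
  - rewrite I_mat_eq.
    pose proof Ci_neq0; pose proof (RtoC_neq0 omega Homega); pose proof (RtoC_neq0 2 ltac:(lra)).
    unfold Jm; M2_ext; unfold lam, Cdiv; field; repeat split; auto using C1_neq_C0.
Qed.

Variable alpha : R.
Hypothesis Halpha : 0 < alpha < PI / 2.
Hypothesis Hcone_U : forall w, cone alpha w -> U w.
Hypothesis Hcone_det : forall w, cone alpha w -> mdet (Hp w) <> C0.

(* [Y^-1 W] is constant along the segment from 1 to [z], which stays in the cone. *)
Lemma W_MN_eq_I_W_MN_mul (z : Cx) : cone alpha z ->
  W_MN Hp l mu z = mmul (I_mat l mu (W_MN Hp l mu) z)
    (mmul (minv (I_mat l mu (W_MN Hp l mu) C1)) (W_MN Hp l mu C1)).
Proof.
  intro Hz.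
  set (W := W_MN Hp l mu); set (Y := I_mat l mu W).
  assert (HY : forall w, cone alpha w -> mdet (Y w) <> C0)
    by (intros w Hw; apply mdet_I_W_MN, Hcone_det, cone_Cinv, Hw).
  set (p := fun s => Cadd C1 (Cmul (RtoC s) (Csub z C1))).
  assert (Hp1 : p 1 = z) by (unfold p; apply Cx_eq; simpl; ring).
  assert (Hp0 : p 0 = C1) by (unfold p; apply Cx_eq; simpl; ring).
  assert (Hconst : mmul (minv (Y (p 1))) (W (p 1)) = mmul (minv (Y (p 0))) (W (p 0))).
  { apply (M2derivable_pt_lim_zero_const_01 (fun s => mmul (minv (Y (p s))) (W (p s)))).
    intros t Ht.
    assert (Hpt : cone alpha (p t)) by (apply cone_segment; assumption).
    assert (Hipt : cone alpha (Cinv (p t))) by (apply cone_Cinv, Hpt).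
    apply (M2derivable_pt_lim_minv_mult _ _ _ (Csub z C1) (L_mat omega l mu (p t))).
    - apply M2derivable_pt_lim_I_W_MN; try apply Hcone_U; try apply Cderivable_pt_lim_segment;
        try apply Hpt; try apply Hipt; assumption.
    - apply M2derivable_pt_lim_W_MN;
        [apply Hcone_U, Hpt | apply Cderivable_pt_lim_segment | apply Hpt].
    - apply HY, Hpt. }
  rewrite Hp1, Hp0 in Hconst; rewrite <- Hconst, mmul_minv_r by (apply HY, Hz); reflexivity.
Qed.

End Solutions.

Lemma I_mat_C1 (l mu : R) (W : Cx -> M2) :
  I_mat l mu W C1 = mmul (mscal (Copp Ci) Jm) (W C1).
Proof. rewrite I_mat_eq, Cinv_C1, fexp_C1; unfold Jm; M2_ext; ring. Qed.

Lemma mscal_Ci_Jm_sqr : mmul (mscal (Copp Ci) Jm) (mscal (Copp Ci) Jm) = mId.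
Proof. unfold Jm; M2_ext; apply Cx_eq; simpl; ring. Qed.

Theorem mainTheorem6 (omega A B alpha beta : R) (Hp : Cx -> M2) :
  0 < omega -> 0 <= B -> 0 < A ->
  0 < alpha < PI / 2 -> 0 < beta < PI / 2 ->
  mholo_on Hp (S_plus alpha beta) ->
  smooth_upto Hp (S_plus alpha beta) (S_plus_cl alpha beta) ->
  (forall z, S_plus_cl alpha beta z -> mdet (Hp z) <> C0) ->
  Hp C0 = mId ->
  transforms_L omega (B / omega) (A / (2 * omega)) Hp (S_plus alpha beta) ->
  let l := B / omega in
  let mu := A / (2 * omega) in
  let Wp := fun z => mmul (Hp z) (F_mat l mu z) in
  let WpMN := fun z => mmul (Wp z) (M_N l) in
  let What_m := I_mat l mu WpMN in
  exists Q : M2,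
    (forall z, Sigma1 alpha beta z -> WpMN z = mmul (What_m z) Q) /\
    mmul Q Q = mId.
Proof.
  intros Homega _ _ Halpha Hbeta _ _ Hdet _ [H' [Hderiv Htransforms]] l mu Wp WpMN What_m.
  change WpMN with (W_MN Hp l mu) in What_m |- *; subst What_m.
  assert (Hcone_det : forall w, cone alpha w -> mdet (Hp w) <> C0).
  { intros w Hw; apply Hdet; right.
    destruct (cone_S_plus alpha beta w Halpha ltac:(lra) Hw); split; [| lra]; assumption. }
  assert (Hcone_U : forall w, cone alpha w -> S_plus alpha beta w)
    by (intros w Hw; apply cone_S_plus; auto; lra).
  pose proof (W_MN_eq_I_W_MN_mul omega l mu Hp H' _ Hderiv Htransforms ltac:(lra)
                alpha Halpha Hcone_U Hcone_det) as Hrel.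
  assert (Hone : cone alpha C1).
  { pose proof (tan_gt_0 alpha (proj1 Halpha) (proj2 Halpha)).
    split; simpl; [| rewrite Rabs_R0]; lra. }
  exists (mmul (minv (I_mat l mu (W_MN Hp l mu) C1)) (W_MN Hp l mu C1)); split.
  - intros z Hz; apply Hrel, (Sigma1_sub_cone alpha beta z Halpha Hz).
  - apply (mmul_sqr_id_of_conj (mscal (Copp Ci) Jm) (W_MN Hp l mu C1)).
    + apply mdet_W_MN, Hcone_det, Hone.
    + exact mscal_Ci_Jm_sqr.
    + rewrite <- (I_mat_C1 l mu (W_MN Hp l mu)); apply Hrel, Hone.
Qed.
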